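(* Let $A(x)=\sum_{n\ge0}a_nx^n$ and $B(x)=\sum_{k\ge0}b_kx^k$ be formal power series over a field of characteristic $0$, and assume that either $B$ is a polynomial or $a_0=0$ (so that $B(A(x))=\sum_k b_kA(x)^k$ is a well-defined formal power series). Suppose $B(A(x))=x$. Then $a_1\ne0$ and for every $n\ge2$, \[ a_n=-a_1\sum_{k\ge1}b_k\,t^{(k)}_n , \] where the sum has only finitely many nonzero terms.
   Context: For a sequence $(a_n)_{n\ge0}$ with generating function $A(x)=\sum_{n\ge0}a_nx^n$, set $a^{(k)}_n=[x^n]A(x)^k$ for $k\ge1$, $n\ge0$. The truncated convolution powers $t^{(k)}_n$ ($k\ge1$, $n\ge0$) are defined recursively by $t^{(1)}_n=0$ for all $n$, and for $k>1$ \[ t^{(k)}_n=\sum_{j=1}^{n-1}a_{n-j}\,a^{(k-1)}_j+a_0\,t^{(k-1)}_n \] (the sum being empty when $n\le1$). *)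

(* Formal power series over R are represented by their
   coefficient sequences nat -> R. *)
From HB Require Import structures.
From mathcomp Require Import all_boot all_order all_algebra.
Set Implicit Arguments. Unset Strict Implicit. Unset Printing Implicit Defensive.
Import Order.TTheory GRing.Theory Num.Theory.
Local Open Scope ring_scope.

(* acp a k n = a^{(k)}_n = [x^n] A(x)^k  (with A^0 = 1). *)
Fixpoint acp (R : nzRingType) (a : nat -> R) (k n : nat) : R :=
  match k with
  | 0 => (n == 0%N)%:R
  | k'.+1 => \sum_(j < n.+1) a j * acp a k' (n - j)
  end.

(* tcp a k n = t^{(k)}_n : t^{(1)}_n = 0 and for k > 1
   t^{(k)}_n = sum_{j=1}^{n-1} a_{n-j} a^{(k-1)}_j + a_0 t^{(k-1)}_n.
   (The value at k = 0 is irrelevant and set to 0.) *)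
Fixpoint tcp (R : nzRingType) (a : nat -> R) (k n : nat) : R :=
  match k with
  | 0 => 0
  | k'.+1 =>
      if k' == 0%N then 0
      else \sum_(1 <= j < n) a (n - j)%N * acp a k' j + a 0%N * tcp a k' n
  end.

(* B(A(x)) = x, coefficientwise: for each n, the series
   sum_k b_k a^{(k)}_n has finite support and its sum is [n == 1]. *)
Definition comp_is_x (R : nzRingType) (a b : nat -> R) : Prop :=
  forall n : nat, exists N : nat,
    (forall k, (N < k)%N -> b k * acp a k n = 0) /\
    \sum_(k < N.+1) b k * acp a k n = (n == 1%N)%:R.

(* Only the summands a_n a_0^(k-1) of [x^n] A^k contain a_n, and there are k
   of them, so a^(k)_n = t^(k)_n + k a_0^(k-1) a_n.  Summing against b_k,
   coefficient n of B(A(x)) = x reads [n == 1] = sum_k b_k t^(k)_n + B'(a_0) a_n.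
   For n = 1 (where t^(k)_1 = 0) this gives B'(a_0) a_1 = 1; for n >= 2 it gives
   a_n = - B'(a_0)^-1 sum_k b_k t^(k)_n = - a_1 sum_k b_k t^(k)_n. *)
From HB Require Import structures.
From mathcomp Require Import all_boot all_order all_algebra.
From mathcomp Require Import ring.
Set Implicit Arguments. Unset Strict Implicit. Unset Printing Implicit Defensive.
Import Order.TTheory GRing.Theory Num.Theory.
Local Open Scope ring_scope.

Lemma big_ord_support (V : nmodType) (F : nat -> V) N M :
  (N <= M)%N -> (forall k, (N < k)%N -> F k = 0) ->
  \sum_(k < M.+1) F k = \sum_(k < N.+1) F k.
Proof.
move=> le_NM F0; rewrite -!(big_mkord xpredT) (@big_cat_nat _ _ _ N.+1) //=.
by rewrite [X in _ + X]big_nat_cond [X in _ + X]big1 ?addr0 // => k /andP[/andP[/F0]].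
Qed.

Section ConvolutionPowers.
Variables (R : nzRingType) (a : nat -> R).

Lemma acp_at0 k : acp a k 0 = a 0%N ^+ k.
Proof.
elim: k => [|k IHk] /=; first by rewrite expr0.
by rewrite big_ord1 subnn IHk exprS.
Qed.

Lemma acpS_split k n : (0 < n)%N ->
  acp a k.+1 n = a n * a 0%N ^+ k
     + \sum_(1 <= j < n) a (n - j)%N * acp a k j + a 0%N * acp a k n.
Proof.
move=> n_gt0 /=.
rewrite -(big_mkord xpredT (fun j => a j * acp a k (n - j))).
rewrite big_nat_rev /= big_nat_recr //= add0n subnn !subn0.
rewrite big_ltn // subSS !subn0 subnn acp_at0.
congr (_ + _ + _); apply: eq_big_nat => j /andP[_ lt_jn].
by rewrite subSS subKn // ltnW.
Qed.

Lemma tcp_at1 k : tcp a k 1 = 0.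
Proof.
elim: k => [|k IHk] //=; case: ifP => // _.
by rewrite big_geq // IHk mulr0 addr0.
Qed.

Lemma tcpSS k n : tcp a k.+2 n
  = \sum_(1 <= j < n) a (n - j)%N * acp a k.+1 j + a 0%N * tcp a k.+1 n.
Proof. by []. Qed.

End ConvolutionPowers.

Section Composition.
Variables (R : comNzRingType) (a b : nat -> R).

Lemma acp_tcp k n : (0 < n)%N ->
  acp a k n = tcp a k n + k%:R * a 0%N ^+ k.-1 * a n.
Proof.
move=> n_gt0; elim: k => [|[|k] IHk].
- by rewrite /= !mul0r addr0; case: n n_gt0.
- rewrite acpS_split //= big1_seq ?subn0 => [|j]; last first.
    by rewrite mem_index_iota => /andP[_ /andP[]]; case: j => // j; rewrite mulr0.
  by rewrite gtn_eqF // mulr0 !addr0 expr0 !mulr1 mul1r add0r.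
by rewrite acpS_split // IHk tcpSS !succnK -[k.+2]addn1 natrD exprS; ring.
Qed.

(* The k-th term k b_k a_0^(k-1) of B'(a_0). *)
Definition dcomp k := b k * (k%:R * a 0%N ^+ k.-1).

Lemma mul_tcp_acp k n : (0 < n)%N ->
  b k * tcp a k n = b k * acp a k n - dcomp k * a n.
Proof. by move=> n_gt0; rewrite acp_tcp // /dcomp; ring. Qed.

Lemma sum_tcp_acp M n : (0 < n)%N ->
  \sum_(k < M) b k * tcp a k n
    = \sum_(k < M) b k * acp a k n - (\sum_(k < M) dcomp k) * a n.
Proof.
by move=> n_gt0; rewrite mulr_suml -sumrB; apply: eq_bigr => k _; rewrite mul_tcp_acp.
Qed.

Lemma comp_is_x_coef1 : comp_is_x a b ->
  exists N, (forall k, (N < k)%N -> dcomp k = 0) /\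
            (\sum_(k < N.+1) dcomp k) * a 1%N = 1.
Proof.
move=> /(_ 1%N) [N [acp1_0 acp1_sum]].
have acp1 k : b k * acp a k 1 = dcomp k * a 1%N.
  by rewrite acp_tcp // tcp_at1 add0r /dcomp !mulrA.
have dsum : (\sum_(k < N.+1) dcomp k) * a 1%N = 1.
  by rewrite mulr_suml -[1]/((1 == 1)%N%:R) -acp1_sum; apply: eq_bigr => k _.
exists N; split=> // k lt_Nk.
have dk_a1 : dcomp k * a 1%N = 0 by rewrite -acp1 acp1_0.
by rewrite -[dcomp k]mulr1 -dsum mulrA mulrAC dk_a1 mul0r.
Qed.

End Composition.

Theorem theorem1 (R : fieldType) (HR : [pchar R] =i pred0)
  (a b : nat -> R)
  (Hwd : (exists d : nat, forall k, (d < k)%N -> b k = 0) \/ a 0%N = 0)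
  (Hcomp : comp_is_x a b) :
  a 1%N != 0 /\
  forall n : nat, (2 <= n)%N ->
    exists N : nat,
      (forall k, (N < k)%N -> b k * tcp a k n = 0) /\
      a n = - a 1%N * \sum_(1 <= k < N.+1) b k * tcp a k n.
Proof.
have [N1 [dcomp0 dsum]] := comp_is_x_coef1 Hcomp.
split=> [|n n_ge2].
  by apply: contra_eq_neq dsum => ->; rewrite mulr0 eq_sym oner_neq0.
have [N [acp0 acp_sum]] := Hcomp n.
have n_gt0 : (0 < n)%N by apply: ltnW.
exists (maxn N N1); split=> [k|].
  by rewrite gtn_max mul_tcp_acp // => /andP[/acp0 -> /dcomp0 ->]; rewrite mul0r subr0.
have sum_from0 : \sum_(1 <= k < (maxn N N1).+1) b k * tcp a k n
                 = \sum_(k < (maxn N N1).+1) b k * tcp a k n.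
  by rewrite -(big_mkord xpredT (fun k => b k * tcp a k n)) [RHS]big_ltn //= mulr0 add0r.
rewrite sum_from0 sum_tcp_acp // (big_ord_support (leq_maxl N N1) acp0).
rewrite (big_ord_support (leq_maxr N N1) dcomp0) acp_sum gtn_eqF // sub0r.
by rewrite mulrN mulNr opprK mulrA [a 1%N * _]mulrC dsum mul1r.
Qed.
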